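(* Let $L$ be a regular pseudocomplemented de Morgan algebra with dual $pm$-space $P$. If there exist $x,y\in P$ with $\ell_\zeta(x,y)=n$ for some $1\le n<\omega$, then $L$ does not satisfy the identity $(x\wedge x^{\prime\ast})^{(n-1)(\prime\ast)}\approx(x\wedge x^{\prime\ast})^{n(\prime\ast)}$.
   Context: A $pm$-algebra is $(L;\wedge,\vee,{}^\ast,{}^\prime,0,1)$ with bounded distributive lattice reduct, pseudocomplement ${}^\ast$ and de Morgan involution ${}^\prime$; it is regular if any two congruences sharing a class are equal. Its dual $pm$-space $(P;\tau,\le,\zeta)$ is its Priestley space of prime ideals with the order-reversing involution $\zeta(I)=\{a:a'\notin I\}$. Notation: $x^{0(\prime\ast)}=x$, $x^{(k+1)(\prime\ast)}=((x^{k(\prime\ast)})')^\ast$. $\ell(x,y)$ is the distance between $x$ and $y$ in the comparability graph of $(P;\le)$ ($0$ if $x=y$, $\infty$ if not connected). The $\zeta$-distance is $\ell_\zeta(x,y)=\min\{\ell(x,y),\ell(x,\zeta(y))\}$. *)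

From HB Require Import structures.
From mathcomp Require Import all_boot all_order.
Set Implicit Arguments. Unset Strict Implicit. Unset Printing Implicit Defensive.
Import Order.TTheory.
Local Open Scope order_scope.

Section PM.
Context {disp : Order.disp_t} {L : tbDistrLatticeType disp}.

Definition is_pseudocomplement (star : L -> L) : Prop :=
  forall a x : L, (a `&` x = \bot) <-> (x <= star a).

Definition is_deMorgan_involution (neg : L -> L) : Prop :=
  (forall a : L, neg (neg a) = a) /\
  (forall a b : L, neg (a `&` b) = neg a `|` neg b).

Definition is_pm_algebra (star neg : L -> L) : Prop :=
  is_pseudocomplement star /\ is_deMorgan_involution neg.

(* pstar_iter k x = x^{k(prime star)}: iter 0 is x, iter (k+1) is star (neg (iter k)) *)
Definition pstar_iter (star neg : L -> L) (k : nat) (x : L) : L :=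
  iter k (fun y => star (neg y)) x.

(* Congruences of the pm-algebra (constants are automatically preserved). *)
Definition is_congruence (star neg : L -> L) (th : L -> L -> Prop) : Prop :=
  (forall a, th a a) /\ (forall a b, th a b -> th b a) /\
  (forall a b c, th a b -> th b c -> th a c) /\
  (forall a b c d, th a b -> th c d -> th (a `&` c) (b `&` d)) /\
  (forall a b c d, th a b -> th c d -> th (a `|` c) (b `|` d)) /\
  (forall a b, th a b -> th (star a) (star b)) /\
  (forall a b, th a b -> th (neg a) (neg b)).

Definition is_regular (star neg : L -> L) : Prop :=
  forall th ph : L -> L -> Prop,
    is_congruence star neg th -> is_congruence star neg ph ->
    (exists a : L, forall b : L, th a b <-> ph a b) ->
    forall x y : L, th x y <-> ph x y.

(* Prime ideals of L: the points of the dual Priestley space. *)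
Definition prime_ideal (I : L -> Prop) : Prop :=
  I \bot /\ ~ I \top /\
  (forall a b : L, I b -> a <= b -> I a) /\
  (forall a b : L, I a -> I b -> I (a `|` b)) /\
  (forall a b : L, I (a `&` b) -> I a \/ I b).

(* Order of the Priestley space: inclusion of prime ideals. *)
Definition ideal_le (I J : L -> Prop) : Prop := forall a, I a -> J a.

Definition comparable_ideals (I J : L -> Prop) : Prop :=
  ideal_le I J \/ ideal_le J I.

Definition zeta (neg : L -> L) (I : L -> Prop) : L -> Prop :=
  fun a => ~ I (neg a).

(* dist_le k I J : I and J are joined in the comparability graph of
   (P; <=) by a walk of at most k edges, i.e. ell(I,J) <= k.
   (Comparability is reflexive here, so "exactly k steps" with possible
   stuttering is the same as "at most k edges".) *)
Fixpoint dist_le (k : nat) (I J : L -> Prop) : Prop :=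
  match k with
  | 0 => ideal_le I J /\ ideal_le J I
  | S k' => exists K : L -> Prop,
      prime_ideal K /\ dist_le k' I K /\ comparable_ideals K J
  end.

Definition dist_eq (n : nat) (I J : L -> Prop) : Prop :=
  dist_le n I J /\ (forall m, (m < n)%N -> ~ dist_le m I J).

Definition zeta_dist_eq (neg : L -> L) (n : nat) (I J : L -> Prop) : Prop :=
  (dist_le n I J \/ dist_le n I (zeta neg J)) /\
  (forall m, (m < n)%N -> ~ dist_le m I J /\ ~ dist_le m I (zeta neg J)).

End PM.

From HB Require Import structures.
From mathcomp Require Import all_boot all_order.
From mathcomp Require Import boolp classical_sets.
From Stdlib Require Import Classical.
Import Order.TTheory.
Set Implicit Arguments. Unset Strict Implicit.
Local Open Scope order_scope.

(* Let t_k(a) be the k-th iterate of x |-> (x')^* at a /\ (a')^*; these elements decrease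
   in k.  Put a^+ := ((a')^* )', so that a \/ a^+ = 1.  Regularity forces the identity
   a /\ a^+ <= b \/ b^*, hence the prime spectrum has no three-element chains; so after
   replacing I, J by zeta I, zeta J we may take I minimal, and the last step of a shortest
   walk from I to J (or zeta J) ends, up to zeta, at a maximal prime z.  The zeta-ball of
   radius n-1 around I is compact (induction on the radius, using the prime ideal
   theorem), and z lies outside it, so some a in z belongs to no prime of that ball.
   Since b^* lies in a prime s iff b misses some prime below s, a backward induction along
   walks gives t_{n-1}(a) notin I, while following the walk from z back to I gives
   t_n(a) in I. *)

(** * Ideals, filters and the prime ideal theorem *)

Section PrimeIdealTheorem.
Context {disp : Order.disp_t} {L : tbDistrLatticeType disp}.
Implicit Types (a b c d : L) (I J Z F G : L -> Prop).

Definition is_ideal Z :=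
  [/\ Z \bot, forall a b, Z b -> a <= b -> Z a & forall a b, Z a -> Z b -> Z (a `|` b)].

Definition is_filter F :=
  [/\ F \top, forall a b, F a -> a <= b -> F b & forall a b, F a -> F b -> F (a `&` b)].

Lemma prime_ideal0 I : prime_ideal I -> I \bot. Proof. by case. Qed.
Lemma prime_ideal_neqT I : prime_ideal I -> ~ I \top. Proof. by case=> _ []. Qed.
Lemma prime_ideal_le I a b : prime_ideal I -> I b -> a <= b -> I a.
Proof. by case=> _ [_ [+ _]]; apply. Qed.
Lemma prime_idealU I a b : prime_ideal I -> I a -> I b -> I (a `|` b).
Proof. by case=> _ [_ [_ [+ _]]]; apply. Qed.
Lemma prime_idealI I a b : prime_ideal I -> I (a `&` b) -> I a \/ I b.
Proof. by case=> _ [_ [_ [_ +]]]; apply. Qed.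
Lemma prime_idealI_notin I a b : prime_ideal I -> ~ I a -> ~ I b -> ~ I (a `&` b).
Proof. by move=> pI na nb /(prime_idealI pI) []. Qed.

Lemma not_ideal_le I J : ~ ideal_le I J -> exists2 a, I a & ~ J a.
Proof.
move=> nIJ; apply: NNPP => hne; apply: nIJ => a Ia.
by apply: NNPP => nJa; apply: hne; exists a.
Qed.

Lemma ideal_le_anti I J : ideal_le I J -> ideal_le J I -> I = J.
Proof. by move=> IJ JI; apply/funext => a; apply/propext; split=> [/IJ|/JI]. Qed.

Lemma comparable_idealsC I J : comparable_ideals I J -> comparable_ideals J I.
Proof. by case; [right | left]. Qed.

Lemma prime_is_ideal I : prime_ideal I -> is_ideal I.
Proof.
move=> pI; split; first exact: prime_ideal0.
- by move=> a b; apply: prime_ideal_le.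
- by move=> a b; apply: prime_idealU.
Qed.

Lemma prime_compl_filter I : prime_ideal I -> is_filter (fun a => ~ I a).
Proof.
move=> pI; split; first exact: prime_ideal_neqT.
- by move=> a b nIa ab Ib; exact: nIa (prime_ideal_le pI Ib ab).
- by move=> a b; apply: prime_idealI_notin.
Qed.

Lemma is_ideal_principal c : is_ideal (fun a => a <= c).
Proof.
split; first exact: le0x.
- by move=> a b bc ab; apply: le_trans bc.
- by move=> a b ac bc; rewrite leUx ac.
Qed.

Lemma is_filter_principal c : is_filter (fun a => c <= a).
Proof.
split; first exact: lex1.
- by move=> a b ca ab; apply: le_trans ab.
- by move=> a b ca cb; rewrite lexI ca.
Qed.

Definition join_ideal I J c := exists a b, [/\ I a, J b & c <= a `|` b].
Definition meet_filter F G c := exists a b, [/\ F a, G b & a `&` b <= c].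

Lemma is_ideal_join I J : is_ideal I -> is_ideal J -> is_ideal (join_ideal I J).
Proof.
case=> I0 _ IU [J0 _ JU]; split.
- by exists \bot, \bot; split; rewrite ?le0x.
- by move=> c d [a [b [Ia Jb db]]] cd; exists a, b; split=> //; apply: le_trans db.
move=> c d [a [b [Ia Jb cab]]] [a' [b' [Ia' Jb' da'b']]].
exists (a `|` a'), (b `|` b'); split; [exact: IU | exact: JU |].
rewrite leUx; apply/andP; split.
- by apply: le_trans cab _; apply: leU2; exact: leUl.
- by apply: le_trans da'b' _; apply: leU2; exact: leUr.
Qed.

Lemma join_ideall I J a : J \bot -> I a -> join_ideal I J a.
Proof. by move=> J0 Ia; exists a, \bot; split; rewrite ?joinx0. Qed.

Lemma join_idealr I J a : I \bot -> J a -> join_ideal I J a.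
Proof. by move=> I0 Ja; exists \bot, a; split; rewrite ?join0x. Qed.

Lemma is_filter_meet F G : is_filter F -> is_filter G -> is_filter (meet_filter F G).
Proof.
case=> F1 _ FI [G1 _ GI]; split.
- by exists \top, \top; split; rewrite ?lex1.
- by move=> c d [a [b [Fa Gb abc]]] cd; exists a, b; split=> //; apply: le_trans cd.
move=> c d [a [b [Fa Gb abc]]] [a' [b' [Fa' Gb' a'b'd]]].
exists (a `&` a'), (b `&` b'); split; [exact: FI | exact: GI |].
rewrite lexI; apply/andP; split.
- by apply: le_trans abc; apply: leI2; exact: leIl.
- by apply: le_trans a'b'd; apply: leI2; exact: leIr.
Qed.

Lemma meet_filterl F G a : G \top -> F a -> meet_filter F G a.
Proof. by move=> G1 Fa; exists a, \top; split; rewrite ?meetx1. Qed.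

Lemma meet_filterr F G a : F \top -> G a -> meet_filter F G a.
Proof. by move=> F1 Ga; exists \top, a; split; rewrite ?meet1x. Qed.

Definition up_image (g : L -> L) Z b := exists2 a, Z a & g a <= b.
Definition down_image (g : L -> L) F b := exists2 a, F a & b <= g a.

Lemma is_filter_up_image g Z : (forall a b, a <= b -> g b <= g a) -> is_ideal Z ->
  is_filter (up_image g Z).
Proof.
move=> g_anti [Z0 _ ZU]; split; first by exists \bot; rewrite ?lex1.
- by move=> b c [a Za gab] bc; exists a => //; apply: le_trans bc.
move=> b c [a Za gab] [a' Za' ga'c]; exists (a `|` a'); first exact: ZU.
rewrite lexI; apply/andP; split.
- by apply: le_trans gab; apply: g_anti; exact: leUl.
- by apply: le_trans ga'c; apply: g_anti; exact: leUr.
Qed.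

Lemma is_ideal_down_image g F : (forall a b, a <= b -> g b <= g a) -> is_filter F ->
  is_ideal (down_image g F).
Proof.
move=> g_anti [F1 _ FI]; split; first by exists \top; rewrite ?le0x.
- by move=> b c [a Fa cga] bc; exists a => //; apply: le_trans cga.
move=> b c [a Fa bga] [a' Fa' cga']; exists (a `&` a'); first exact: FI.
rewrite leUx; apply/andP; split.
- by apply: le_trans bga _; apply: g_anti; exact: leIl.
- by apply: le_trans cga' _; apply: g_anti; exact: leIr.
Qed.

Section Separation.
Variables (Z F : L -> Prop).
Hypotheses (iZ : is_ideal Z) (iF : is_filter F) (ZF : forall a, Z a -> ~ F a).

Definition separating_ideal M :=
  [/\ is_ideal M, forall a, Z a -> M a & forall a, M a -> ~ F a].

Lemma exists_maximal_separating_ideal :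
  exists2 M, separating_ideal M & forall X, separating_ideal X ->
    (forall a, M a -> X a) -> forall a, X a -> M a.
Proof.
pose T := {X | separating_ideal X}.
pose R (X Y : T) : bool := `[< forall a, sval X a -> sval Y a >].
have sepZ : separating_ideal Z by split.
have [[M sepM] maxM] : exists t, premaximal R t.
  apply: (@ZL_preorder T (exist _ Z sepZ) R).
  - by move=> X; apply/asboolP.
  - by move=> X Y W /asboolP XY /asboolP YW; apply/asboolP => a /XY /YW.
  move=> A Atot; pose U a := Z a \/ exists2 X, A X & sval X a.
  have sepU : separating_ideal U.
    case: iZ => Z0 Zle ZU; split => //; last 2 first.
    - by move=> a; left.
    - by move=> a [/ZF //|[[X [_ _ XF]] _ /XF]].
    have Xle (X : T) a b : sval X b -> a <= b -> sval X a.
      by case: (svalP X) => -[_ + _] _ _; apply.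
    have XU (X : T) a b : sval X a -> sval X b -> sval X (a `|` b).
      by case: (svalP X) => -[_ _ +] _ _; apply.
    have ZX (X : T) a : Z a -> sval X a by case: (svalP X) => _ + _; apply.
    split; first by left.
    - move=> a b [Zb|[X AX Xb]] ab; first by left; apply: Zle ab.
      by right; exists X => //; apply: Xle ab.
    move=> a b [Za|[X AX Xa]] [Zb|[Y AY Yb]].
    - by left; apply: ZU.
    - by right; exists Y => //; apply: XU => //; apply: ZX.
    - by right; exists X => //; apply: XU => //; apply: ZX.
    case: (Atot X Y AX AY) => /asboolP XY.
    - by right; exists Y => //; apply: XU => //; apply: XY.
    - by right; exists X => //; apply: XU => //; apply: XY.
  by exists (exist _ U sepU) => X AX; apply/asboolP => a Xa /=; right; exists X.
exists M => // X sepX MX.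
by have /asboolP := maxM (exist _ X sepX) (asboolT MX); apply.
Qed.

Lemma maximal_separating_ideal_prime M : separating_ideal M ->
  (forall X, separating_ideal X -> (forall a, M a -> X a) -> forall a, X a -> M a) ->
  prime_ideal M.
Proof.
case=> -[M0 Mle MU] ZM MF maxM.
have MT : ~ M \top by move=> /MF; apply; case: iF.
have gen c : ~ M c -> exists d m, [/\ F d, M m & d <= m `|` c].
  move=> nMc; apply: NNPP => noF; apply: nMc.
  apply: (maxM (join_ideal M (fun x => x <= c))); last exact: join_idealr M0 (lexx c).
  - split; first exact: is_ideal_join (is_ideal_principal c).
    + by move=> a Za; apply: join_ideall; [exact: le0x | exact: ZM].
    + move=> a [m [x [Mm xc amx]]] Fa; apply: noF; exists a, m; split => //.
      by apply: le_trans amx _; apply: leU2.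
  - by move=> a Ma; apply: join_ideall; [exact: le0x|].
split=> //; split=> //; split=> //; split=> //.
move=> a b Mab; apply: NNPP => /not_or_and [nMa nMb].
have [d [m [Fd Mm dma]]] := gen a nMa.
have [d' [m' [Fd' Mm' dmb]]] := gen b nMb.
apply: (MF (m `|` m' `|` (a `&` b))); first exact: MU (MU _ _ Mm Mm') Mab.
case: iF => _ Fle FI; apply: Fle (FI _ _ Fd Fd') _.
rewrite joinIr; apply: leI2.
- by apply: le_trans dma _; apply: leU2 => //; exact: leUl.
- by apply: le_trans dmb _; apply: leU2 => //; exact: leUr.
Qed.

End Separation.

Theorem prime_ideal_separation Z F : is_ideal Z -> is_filter F ->
  (forall a, Z a -> ~ F a) ->
  exists2 q, prime_ideal q & (forall a, Z a -> q a) /\ (forall a, F a -> ~ q a).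
Proof.
move=> iZ iF ZF; have [M sepM maxM] := exists_maximal_separating_ideal iZ ZF.
exists M; first exact: maximal_separating_ideal_prime maxM.
by case: sepM => _ ZM MF; split => // a Fa /MF.
Qed.

Corollary prime_ideal_avoiding F : is_filter F -> ~ F \bot ->
  exists2 q, prime_ideal q & forall a, F a -> ~ q a.
Proof.
move=> iF F0; have [|q pq [_ qF]] := prime_ideal_separation (is_ideal_principal \bot) iF.
  by move=> a; rewrite lex0 => /eqP ->.
by exists q.
Qed.

Corollary prime_ideal_containing Z : is_ideal Z -> ~ Z \top ->
  exists2 q, prime_ideal q & forall a, Z a -> q a.
Proof.
move=> iZ Z1; have [|q pq [Zq _]] := prime_ideal_separation iZ (is_filter_principal \top).
  by move=> a Za; rewrite le1x => /eqP Ea; apply: Z1; rewrite -Ea.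
by exists q.
Qed.

End PrimeIdealTheorem.

(** * Pseudocomplemented de Morgan algebras and their prime spectrum *)

Section PmAlgebra.
Context {disp : Order.disp_t} {L : tbDistrLatticeType disp}.
Variables (star neg : L -> L).
Hypotheses (hstar : is_pseudocomplement star) (hneg : is_deMorgan_involution neg).
Implicit Types (a b c : L) (I J K p q r s x y z : L -> Prop).

Lemma negK : involutive neg. Proof. exact: hneg.1. Qed.
Lemma neg_inj : injective neg. Proof. exact: can_inj negK. Qed.
Lemma negI a b : neg (a `&` b) = neg a `|` neg b. Proof. exact: hneg.2. Qed.
Lemma negU a b : neg (a `|` b) = neg a `&` neg b.
Proof. by apply: neg_inj; rewrite negI !negK. Qed.
Lemma le_neg a b : a <= b -> neg b <= neg a.
Proof. by move=> /meet_idPl ab; rewrite -ab negI leUr. Qed.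
Lemma neg1 : neg \top = \bot.
Proof. by apply/eqP; rewrite -lex0 -[X in _ <= X](negK \bot); apply: le_neg; exact: lex1. Qed.
Lemma neg0 : neg \bot = \top. Proof. by rewrite -neg1 negK. Qed.

Lemma starP a b : a `&` b = \bot <-> b <= star a. Proof. exact: hstar. Qed.
Lemma meet_star a : a `&` star a = \bot. Proof. exact/starP. Qed.
Lemma le_star a b : a <= b -> star b <= star a.
Proof. by move=> ab; apply/starP/eqP; rewrite -lex0 -(meet_star b); apply: leI2. Qed.
Lemma star0 : star \bot = \top. Proof. by apply/eqP; rewrite -le1x -starP meet0x. Qed.

Lemma starU a b : star (a `|` b) = star a `&` star b.
Proof.
apply/le_anti; rewrite lexI !le_star ?leUl ?leUr //=; apply/starP.
by rewrite meetUl meetA meet_star meet0x (meetC (star a)) meetA meet_star meet0x joinx0.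
Qed.

Lemma starI_eq a b c : star a = star b -> star (a `&` c) = star (b `&` c).
Proof.
have le_ab a' b' : star a' = star b' -> star (a' `&` c) <= star (b' `&` c).
  move=> eq_ab; apply/starP; rewrite -meetA; apply/starP.
  by rewrite -eq_ab; apply/starP; rewrite meetA; exact: meet_star.
by move=> eq_ab; apply/le_anti; rewrite !le_ab.
Qed.

Definition plus a := neg (star (neg a)).

Lemma join_plus a : a `|` plus a = \top.
Proof. by rewrite /plus -[a in a `|` _]negK -negI meet_star neg0. Qed.

Lemma plus_le a b : a `|` b = \top -> plus a <= b.
Proof. by move=> abT; rewrite /plus -[b]negK; apply/le_neg/starP; rewrite -negU abT neg1. Qed.

Lemma le_plus a b : a <= b -> plus b <= plus a.
Proof. by move=> ab; apply/le_neg/le_star/le_neg. Qed.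

Lemma star_plus_le a : star (plus a) <= a.
Proof.
have -> : star (plus a) = star (plus a) `&` (a `|` plus a) by rewrite join_plus meetx1.
by rewrite meetUr (meetC _ (plus a)) meet_star joinx0 leIr.
Qed.

Definition pstar a := star (neg a).

Lemma le_pstar a b : a <= b -> pstar a <= pstar b.
Proof. by move=> ab; apply/le_star/le_neg. Qed.

Definition pstar_chain k a := pstar_iter star neg k (a `&` pstar a).

Lemma pstar_chainS k a : pstar_chain k.+1 a = pstar (pstar_chain k a).
Proof. by []. Qed.

Lemma pstar_chain_decr k a : pstar_chain k.+1 a <= pstar_chain k a.
Proof.
elim: k => [|k IHk]; last by rewrite pstar_chainS le_pstar.
rewrite pstar_chainS /pstar_chain /= lexI (le_pstar (leIl _ _)) andbT.
(* pstar (pstar a) is star (plus a) *)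
exact: le_trans (le_pstar (leIr _ _)) (star_plus_le a).
Qed.

Lemma zetaK : involutive (zeta neg).
Proof. by move=> I; apply/funext => a; rewrite /zeta negK notK. Qed.

Lemma zeta_anti I J : ideal_le I J -> ideal_le (zeta neg J) (zeta neg I).
Proof. by move=> IJ a nJ /IJ. Qed.

Lemma zeta_prime I : prime_ideal I -> prime_ideal (zeta neg I).
Proof.
move=> pI; rewrite /zeta; split; [|split; [|split; [|split]]].
- by rewrite neg0; apply: prime_ideal_neqT.
- by rewrite neg1; apply; apply: prime_ideal0.
- by move=> a b nIb ab Ia; exact: nIb (prime_ideal_le pI Ia (le_neg ab)).
- by move=> a b nIa nIb; rewrite negU; apply: prime_idealI_notin.
- move=> a b; rewrite negI => nIab; apply: NNPP => /not_or_and [/NNPP Ia /NNPP Ib].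
  exact: nIab (prime_idealU pI Ia Ib).
Qed.

Lemma prime_star_up r s b : prime_ideal r -> ~ r b -> ideal_le r s -> s (star b).
Proof.
move=> pr nrb rs; apply: rs; have := prime_ideal0 pr; rewrite -(meet_star b).
by case/(prime_idealI pr).
Qed.

Lemma prime_star_notin s b : prime_ideal s ->
  (forall r, prime_ideal r -> ideal_le r s -> r b) -> ~ s (star b).
Proof.
move=> ps below sb.
have [|r pr rG] := prime_ideal_avoiding
    (is_filter_meet (prime_compl_filter ps) (is_filter_principal b)).
  case=> d [c [nsd bc dc0]]; apply: nsd; apply: prime_ideal_le ps sb _; apply/starP.
  by apply/eqP; rewrite -lex0; apply: le_trans dc0; rewrite meetC; exact: leI2.
apply: (rG b); first by apply: meet_filterr; [exact: prime_ideal_neqT | exact: lexx].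
apply: below => // c rc; apply: NNPP => nsc; apply: (rG c) rc.
by apply: meet_filterl; [exact: lex1 |].
Qed.

Definition star_plus_eq a b := star a = star b /\ plus a = plus b.

Lemma star_plus_eq_congruence : is_congruence star neg star_plus_eq.
Proof.
have plusE a b : plus a = plus b <-> star (neg a) = star (neg b).
  by rewrite /plus; split=> [/neg_inj|->].
rewrite /star_plus_eq; split; [by []|split; [by move=> a b []|split]].
  by move=> a b c [-> ->] [-> ->].
split.
  move=> a b c d [sab /plusE pab] [scd /plusE pcd]; split.
  - by rewrite (starI_eq c sab) meetC (starI_eq b scd) meetC.
  - by apply/plusE; rewrite !negI !starU pab pcd.
split.
  move=> a b c d [sab /plusE pab] [scd /plusE pcd]; split.
  - by rewrite !starU sab scd.
  - by apply/plusE; rewrite !negU (starI_eq _ pab) meetC (starI_eq _ pcd) meetC.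
split; first by move=> a b [->].
by move=> a b [sab /plusE pab]; split=> //; rewrite /plus !negK sab.
Qed.

Lemma eq_congruence : is_congruence star neg (fun a b => a = b).
Proof. by do ![split] => //= *; subst. Qed.

Lemma regular_star_plus_inj : is_regular star neg ->
  forall a b, star_plus_eq a b -> a = b.
Proof.
move=> reg a b.
have bot_class : exists c, forall d, c = d <-> star_plus_eq c d.
  exists \bot => d; split=> [<- //|[sd _]].
  by rewrite -[d]meetx1 -star0 sd meet_star.
exact: (reg _ _ eq_congruence star_plus_eq_congruence bot_class a b).2.
Qed.

Lemma regular_meet_plus_le : is_regular star neg ->
  forall a b, a `&` plus a <= b `|` star b.
Proof.
move=> reg a b; set c := a `&` plus a; set d := b `|` star b.
have star_d : star d = \bot by rewrite starU meet_star.
have plus_c : plus c = \top by rewrite /c /plus negI starU negK meet_star neg0.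
suff <- : c `|` d = d by exact: leUl.
apply: regular_star_plus_inj => //; split; first by rewrite starU star_d meetx0.
apply/le_anti; rewrite le_plus ?leUr //=.
apply: plus_le; apply/eqP; rewrite -le1x -plus_c; apply: plus_le.
by rewrite joinA join_plus.
Qed.

Definition no_prime_3chain := forall r p q, prime_ideal r -> prime_ideal p -> prime_ideal q ->
  ideal_le r p -> ideal_le p q -> ideal_le p r \/ ideal_le q p.

Lemma regular_no_prime_3chain : is_regular star neg -> no_prime_3chain.
Proof.
move=> reg r p q pr pp pq rp pq_; apply: NNPP => /not_or_and [npr nqp].
have [b pb nrb] := not_ideal_le npr.
have [a qa npa] := not_ideal_le nqp.
have np_plus : ~ p (plus a).
  move=> /pq_ qpa; apply: (prime_ideal_neqT pq); rewrite -(join_plus a).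
  exact: prime_idealU pq qa qpa.
apply: (prime_idealI_notin pp npa np_plus).
apply: (prime_ideal_le pp _ (regular_meet_plus_le reg a b)).
exact: prime_idealU pp pb (prime_star_up pr nrb rp).
Qed.

Definition minimal_prime p := forall r, prime_ideal r -> ideal_le r p -> ideal_le p r.
Definition maximal_prime p := forall q, prime_ideal q -> ideal_le p q -> ideal_le q p.

Lemma no_prime_3chain_maximal r p : no_prime_3chain -> prime_ideal r -> prime_ideal p ->
  ideal_le r p -> ~ ideal_le p r -> maximal_prime p.
Proof. by move=> n3 pr pp rp npr q pq pq_; case: (n3 r p q pr pp pq rp pq_). Qed.

Lemma minimal_or_zeta_minimal I : no_prime_3chain -> prime_ideal I ->
  minimal_prime I \/ minimal_prime (zeta neg I).
Proof.
move=> n3 pI; case: (classic (minimal_prime I)) => [|nmin]; [by left | right].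
have [r [pr rI nIr]] : exists r, [/\ prime_ideal r, ideal_le r I & ~ ideal_le I r].
  by apply: NNPP => hne; apply: nmin => r pr rI; apply: NNPP => nIr; apply: hne; exists r.
move=> s ps sZ; have Is : ideal_le I (zeta neg s) by rewrite -[I]zetaK; apply: zeta_anti.
by case: (n3 r I (zeta neg s) pr pI (zeta_prime ps) rI Is) => // /zeta_anti; rewrite zetaK.
Qed.

Lemma dist_le_zeta k I J : dist_le k I J -> dist_le k (zeta neg I) (zeta neg J).
Proof.
elim: k J => [|k IHk] J /=; first by case=> IJ JI; split; apply: zeta_anti.
case=> K [pK [dIK cKJ]]; exists (zeta neg K); split; first exact: zeta_prime.
split; first exact: IHk.
by case: cKJ => h; [right | left]; apply: zeta_anti.
Qed.

Lemma dist_le_zetaE k I J : dist_le k (zeta neg I) (zeta neg J) <-> dist_le k I J.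
Proof. by split=> [/dist_le_zeta|/dist_le_zeta //]; rewrite !zetaK. Qed.

Lemma zeta_dist_eq_zetar n I J : zeta_dist_eq neg n I J -> zeta_dist_eq neg n I (zeta neg J).
Proof.
rewrite /zeta_dist_eq zetaK => -[d far]; split; first by case: d; [right | left].
by move=> m /far [? ?]; split.
Qed.

Lemma zeta_dist_eq_zeta n I J :
  zeta_dist_eq neg n I J -> zeta_dist_eq neg n (zeta neg I) (zeta neg J).
Proof.
case=> d far; split; first by case: d => /dist_le_zeta; [left | right].
by move=> m /far [nIJ nIzJ]; split=> /dist_le_zetaE.
Qed.

(** * Compactness of zeta-balls *)

Definition all_prime (N : (L -> Prop) -> Prop) := forall q, N q -> prime_ideal q.

(* Compactness of N in the Priestley topology, tested on the directed families of
   clopens {q | a \in q} (a ranging over an ideal) and {q | a \notin q} (a ranging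
   over a filter). *)
Definition ideal_compact (N : (L -> Prop) -> Prop) := forall Z, is_ideal Z ->
  (forall a, Z a -> exists2 q, N q & q a) -> exists2 q, N q & forall a, Z a -> q a.

Definition filter_compact (N : (L -> Prop) -> Prop) := forall F, is_filter F ->
  (forall a, F a -> exists2 q, N q & ~ q a) -> exists2 q, N q & forall a, F a -> ~ q a.

Lemma ideal_compactU N1 N2 : all_prime N1 -> all_prime N2 ->
  ideal_compact N1 -> ideal_compact N2 -> ideal_compact (fun q => N1 q \/ N2 q).
Proof.
move=> p1 p2 c1 c2 Z iZ cover.
have avoid N : ideal_compact N -> ~ (exists2 q, N q & forall a, Z a -> q a) ->
    exists2 a, Z a & forall q, N q -> ~ q a.
  move=> cN nN; apply: NNPP => hne; apply: nN; apply: cN => // a Za.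
  by apply: NNPP => nq; apply: hne; exists a => // q Nq qa; apply: nq; exists q.
case: (classic (exists2 q, N1 q & forall a, Z a -> q a)) => [[q N1q Zq]|n1].
  by exists q; first left.
case: (classic (exists2 q, N2 q & forall a, Z a -> q a)) => [[q N2q Zq]|n2].
  by exists q; first right.
have [a1 Za1 na1] := avoid _ c1 n1; have [a2 Za2 na2] := avoid _ c2 n2.
exfalso; case: iZ => _ _ ZU; have [q [N1q|N2q] qa] := cover _ (ZU _ _ Za1 Za2).
- by apply: (na1 q N1q); apply: prime_ideal_le (p1 q N1q) qa (leUl _ _).
- by apply: (na2 q N2q); apply: prime_ideal_le (p2 q N2q) qa (leUr _ _).
Qed.

Lemma filter_compactU N1 N2 : all_prime N1 -> all_prime N2 ->
  filter_compact N1 -> filter_compact N2 -> filter_compact (fun q => N1 q \/ N2 q).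
Proof.
move=> p1 p2 c1 c2 F iF cover.
have avoid N : filter_compact N -> ~ (exists2 q, N q & forall a, F a -> ~ q a) ->
    exists2 a, F a & forall q, N q -> q a.
  move=> cN nN; apply: NNPP => hne; apply: nN; apply: cN => // a Fa.
  apply: NNPP => nq; apply: hne; exists a => // q Nq.
  by apply: NNPP => nqa; apply: nq; exists q.
case: (classic (exists2 q, N1 q & forall a, F a -> ~ q a)) => [[q N1q Fq]|n1].
  by exists q; first left.
case: (classic (exists2 q, N2 q & forall a, F a -> ~ q a)) => [[q N2q Fq]|n2].
  by exists q; first right.
have [a1 Fa1 qa1] := avoid _ c1 n1; have [a2 Fa2 qa2] := avoid _ c2 n2.
exfalso; case: iF => _ _ FI; have [q [N1q|N2q] nqa] := cover _ (FI _ _ Fa1 Fa2).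
- by apply: nqa; apply: prime_ideal_le (p1 q N1q) (qa1 q N1q) (leIl _ _).
- by apply: nqa; apply: prime_ideal_le (p2 q N2q) (qa2 q N2q) (leIr _ _).
Qed.

Definition up_closure N q := prime_ideal q /\ exists2 K, N K & ideal_le K q.
Definition down_closure N q := prime_ideal q /\ exists2 K, N K & ideal_le q K.

Section Closures.
Variable N : (L -> Prop) -> Prop.
Hypothesis pN : all_prime N.

Lemma ideal_compact_down : ideal_compact N -> ideal_compact (down_closure N).
Proof.
move=> cN Z iZ cover; have [|K NK ZK] := cN Z iZ.
  by move=> a /cover [q [_ [K NK qK]] /qK Ka]; exists K.
by exists K => //; split; [exact: pN | exists K].
Qed.

Lemma filter_compact_up : filter_compact N -> filter_compact (up_closure N).
Proof.
move=> cN F iF cover; have [|K NK FK] := cN F iF.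
  by move=> a /cover [q [_ [K NK Kq]] nqa]; exists K => // /Kq.
by exists K => //; split; [exact: pN | exists K].
Qed.

(* If a lies in a prime q above K, then plus a, whose join with a is \top, is not in K. *)
Lemma ideal_compact_up : filter_compact N -> ideal_compact (up_closure N).
Proof.
move=> cN Z iZ cover.
have [|K NK KF] := cN (up_image plus Z) (is_filter_up_image le_plus iZ).
  move=> f [a Za af]; have [q [pq [K NK Kq]] qa] := cover a Za.
  exists K => // Kf; apply: (prime_ideal_neqT pq); rewrite -(join_plus a).
  exact: prime_idealU pq qa (Kq _ (prime_ideal_le (pN NK) Kf af)).
have [|q pq Zq] := prime_ideal_containing (is_ideal_join (prime_is_ideal (pN NK)) iZ).
  case=> k [a [Kk Za top_le]]; apply: (KF k) Kk; exists a => //; apply: plus_le.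
  by apply/eqP; rewrite joinC -le1x.
case: iZ => Z0 _ _; exists q.
- by split=> //; exists K => // c Kc; apply: Zq; exact: join_ideall.
- by move=> a Za; apply: Zq; apply: join_idealr => //; exact: prime_ideal0 (pN NK).
Qed.

Lemma filter_compact_down : ideal_compact N -> filter_compact (down_closure N).
Proof.
move=> cN F iF cover.
have [|K NK ZK] := cN (down_image star F) (is_ideal_down_image le_star iF).
  move=> c [f Ff cf]; have [q [pq [K NK qK]] nqf] := cover f Ff.
  by exists K => //; apply: prime_ideal_le (pN NK) (prime_star_up pq nqf qK) cf.
have [|q pq qG] := prime_ideal_avoiding (is_filter_meet iF (prime_compl_filter (pN NK))).
  case=> f [d [Ff nKd fd0]]; apply: nKd; apply: ZK; exists f => //; apply/starP.
  by apply/eqP; rewrite -lex0.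
case: iF => F1 _ _; exists q.
- split=> //; exists K => // c qc; apply: NNPP => nKc; apply: (qG c) qc.
  by apply: meet_filterr.
- by move=> f Ff; apply: qG; apply: meet_filterl => //; exact: prime_ideal_neqT (pN NK).
Qed.

End Closures.

Lemma ideal_compact_zeta N : all_prime N -> filter_compact N ->
  ideal_compact (fun q => N (zeta neg q)).
Proof.
move=> pN cN Z iZ cover.
have [|K NK KF] := cN (up_image neg Z) (is_filter_up_image le_neg iZ).
  move=> f [a Za af]; have [q Nzq qa] := cover a Za; exists (zeta neg q) => //.
  have pq : prime_ideal q by rewrite -[q]zetaK; apply/zeta_prime/pN.
  by apply; apply: (prime_ideal_le pq qa); rewrite -[a]negK; apply: le_neg.
by exists (zeta neg K); rewrite ?zetaK // => a Za; apply: KF; exists a.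
Qed.

Definition ball p k q := prime_ideal q /\ dist_le k p q.
Definition zeta_ball p k q := ball p k q \/ ball p k (zeta neg q).

Lemma zeta_ball_prime p k q : zeta_ball p k q -> prime_ideal q.
Proof. by case=> -[pq _] //; rewrite -[q]zetaK; exact: zeta_prime. Qed.

Lemma zeta_ballE p k q : zeta_ball p k (zeta neg q) <-> zeta_ball p k q.
Proof. by rewrite /zeta_ball zetaK; split; case; [right | left | right | left]. Qed.

Lemma ballS p k :
  ball p k.+1 = fun q => up_closure (ball p k) q \/ down_closure (ball p k) q.
Proof.
apply/funext => q; apply/propext; split.
- by case=> pq [K [pK [dK [Kq|qK]]]]; [left | right]; split=> //; exists K.
- case=> -[pq [K [pK dK] cKq]]; split=> //; exists K; do 2!split=> //.
  + by left.
  + by right.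
Qed.

Lemma ball_compact p k : prime_ideal p ->
  ideal_compact (ball p k) /\ filter_compact (ball p k).
Proof.
move=> pp; elim: k => [|k [cI cF]].
  have bpp : ball p 0 p by split=> //; split.
  split=> Z _ cover; exists p => // a /cover [q [_ [pq qp]]].
  - exact: qp.
  - by move=> nqa /pq.
have pk : all_prime (ball p k) by move=> q [].
have pU : all_prime (up_closure (ball p k)) by move=> q [].
have pD : all_prime (down_closure (ball p k)) by move=> q [].
rewrite ballS; split.
- by apply: ideal_compactU => //; [exact: ideal_compact_up | exact: ideal_compact_down].
- by apply: filter_compactU => //; [exact: filter_compact_up | exact: filter_compact_down].
Qed.

Lemma zeta_ball_compact p k : prime_ideal p -> ideal_compact (zeta_ball p k).
Proof.
move=> pp; have [cI cF] := ball_compact k pp; have pk : all_prime (ball p k) by move=> q [].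
apply: ideal_compactU => //; last exact: ideal_compact_zeta.
by move=> q /(pk (zeta neg q)); rewrite -{2}[q]zetaK; exact: zeta_prime.
Qed.

(** * The chain t_k(a) along walks *)

Section ChainAvoidsMinimal.
Variables (p : L -> Prop) (n : nat) (a : L).
Hypothesis far_a : forall q, zeta_ball p n q -> ~ q a.

Lemma pstar_chain_notin_prime k m s : (m + k = n)%N -> prime_ideal s ->
  (forall r, prime_ideal r -> ideal_le r s -> zeta_ball p m r) -> ~ s (pstar_chain k a).
Proof.
elim: k m s => [|k IHk] m s mkn ps below.
  rewrite addn0 in mkn; subst m; apply: (prime_idealI_notin ps).
  - by apply: far_a; apply: below.
  - apply: (prime_star_notin ps) => r pr rs; apply: NNPP => nr.
    exact: far_a _ ((zeta_ballE p n r).2 (below r pr rs)) nr.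
rewrite pstar_chainS; apply: (prime_star_notin ps) => r pr rs; apply: NNPP.
apply: (IHk m.+1 (zeta neg r)); [by rewrite addSnnS | exact: zeta_prime |].
move=> r' pr' r'r; case: (below r pr rs) => -[_ d].
- right; split; first exact: zeta_prime.
  exists r; split=> //; split=> //; left.
  by rewrite -[r]zetaK; apply: zeta_anti.
- left; split=> //; exists (zeta neg r).
  by split; [exact: zeta_prime | split=> //; right].
Qed.

Lemma pstar_chain_notin_minimal : prime_ideal p -> minimal_prime p -> ~ p (pstar_chain n a).
Proof.
move=> pp min_p; apply: (pstar_chain_notin_prime (m := 0)) => // r pr rp.
by left; split=> //; split=> //; apply: min_p.
Qed.

End ChainAvoidsMinimal.

Lemma zeta_mem_pstar x y u : prime_ideal x -> x u -> ideal_le y x -> zeta neg y (pstar u).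
Proof.
move=> px xu yx; apply: (prime_star_up (zeta_prime px) _ (zeta_anti yx)).
by rewrite /zeta negK => /(_ xu).
Qed.

Definition chain_mem a m y := y (pstar_chain m a) \/ zeta neg y (pstar_chain m a).

Lemma chain_mem_zeta a m y : chain_mem a m (zeta neg y) -> chain_mem a m y.
Proof. by rewrite /chain_mem zetaK; case; [right | left]. Qed.

Lemma chain_mem0 a z y : prime_ideal z -> prime_ideal y -> z a ->
  comparable_ideals z y -> chain_mem a 0 y.
Proof.
move=> pz py za [zy|yz].
- by left; apply: (prime_ideal_le py (zy _ za)); exact: leIl.
- right; exact (prime_ideal_le (zeta_prime py) (zeta_mem_pstar pz za yz) (leIr _ _)).
Qed.

Lemma chain_memS a m x y : prime_ideal x -> prime_ideal y ->
  chain_mem a m x -> comparable_ideals x y -> chain_mem a m.+1 y.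
Proof.
move=> px py [xc|zxc] [xy|yx].
- by left; apply: (prime_ideal_le py (xy _ xc)); exact: pstar_chain_decr.
- by right; rewrite pstar_chainS; exact: zeta_mem_pstar px xc yx.
- left; rewrite -[y]zetaK pstar_chainS.
  exact: zeta_mem_pstar (zeta_prime px) zxc (zeta_anti xy).
- right; exact (prime_ideal_le (zeta_prime py) (zeta_anti yx zxc) (pstar_chain_decr m a)).
Qed.

Lemma chain_mem_walk a p k y : prime_ideal y -> dist_le k p y ->
  forall m, chain_mem a m y -> chain_mem a (m + k) p.
Proof.
elim: k y => [|k IHk] y py /=.
  by case=> py' yp m; rewrite addn0; case=> h; [left; exact: yp | right => /py'].
case=> K [pK [dK cKy]] m hy; rewrite -addSnnS.
exact: IHk K pK dK _ (chain_memS py pK hy (comparable_idealsC cKy)).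
Qed.

Lemma chain_mem_succ_in a m p : prime_ideal p -> chain_mem a m p -> p (pstar_chain m.+1 a).
Proof.
move=> pp [pc|zpc]; first exact: prime_ideal_le pp pc (pstar_chain_decr m a).
by rewrite -[p]zetaK pstar_chainS; exact: zeta_mem_pstar (zeta_prime pp) zpc _.
Qed.

Lemma exists_notin_zeta_ball p k z : prime_ideal p -> prime_ideal z ->
  maximal_prime z -> ~ zeta_ball p k z ->
  exists2 a, z a & forall q, zeta_ball p k q -> ~ q a.
Proof.
move=> pp pz max_z far_z; apply: NNPP => hne.
have [|q bq zq] := zeta_ball_compact (k := k) pp (prime_is_ideal pz).
  move=> a za; apply: NNPP => nq; apply: hne; exists a => // q bq qa.
  by apply: nq; exists q.
by apply: far_z; rewrite (ideal_le_anti zq (max_z q (zeta_ball_prime bq) zq)).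
Qed.

Lemma exists_pstar_chain_jump n p J : no_prime_3chain -> prime_ideal p -> minimal_prime p ->
  prime_ideal J -> zeta_dist_eq neg n.+1 p J ->
  exists a, ~ p (pstar_chain n a) /\ p (pstar_chain n.+1 a).
Proof.
move=> n3 pp min_p pJ hJ.
wlog dJ : J pJ hJ / dist_le n.+1 p J.
  move=> hw; case: hJ.1 => dJ; first exact: hw dJ.
  by apply: (hw (zeta neg J)); [exact: zeta_prime | exact: zeta_dist_eq_zetar |].
have far_J : ~ zeta_ball p n J by case: (hJ.2 n (ltnSn n)) => ? ? [] [].
case: dJ => K [pK [dK cKJ]].
have [z [pz max_z far_z Kz]] : exists z, [/\ prime_ideal z, maximal_prime z,
    ~ zeta_ball p n z & comparable_ideals K z \/ comparable_ideals (zeta neg K) z].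
  have nJK : ideal_le K J -> ~ ideal_le J K.
    by move=> KJ JK; apply: far_J; left; rewrite -(ideal_le_anti KJ JK).
  case: cKJ => [KJ | JK].
  - exists J; split=> //; last by left; left.
    exact: no_prime_3chain_maximal n3 pK pJ KJ (nJK KJ).
  - have zK_zJ := zeta_anti JK; exists (zeta neg J); split.
    + exact: zeta_prime.
    + apply: no_prime_3chain_maximal n3 (zeta_prime pK) (zeta_prime pJ) zK_zJ _.
      by move/zeta_anti; rewrite !zetaK => KJ; exact: nJK KJ JK.
    + by move/zeta_ballE.
    + by right; left.
have [a za far_a] := exists_notin_zeta_ball pp pz max_z far_z.
have K0 : chain_mem a 0 K.
  case: Kz => cKz; last apply: chain_mem_zeta.
  - exact: chain_mem0 pz pK za (comparable_idealsC cKz).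
  - exact: chain_mem0 pz (zeta_prime pK) za (comparable_idealsC cKz).
exists a; split; first exact: pstar_chain_notin_minimal.
by apply: chain_mem_succ_in => //; exact: chain_mem_walk pK dK 0 K0.
Qed.

End PmAlgebra.

Theorem theorem3p7 (disp : Order.disp_t) (L : tbDistrLatticeType disp)
    (star neg : L -> L)
    (hpm : is_pm_algebra star neg) (hreg : is_regular star neg)
    (n : nat) (hn : (1 <= n)%N)
    (hxy : exists I J : L -> Prop, prime_ideal I /\ prime_ideal J /\
                                   zeta_dist_eq neg n I J) :
  ~ (forall x : L,
       pstar_iter star neg n.-1 (x `&` star (neg x)) =
       pstar_iter star neg n (x `&` star (neg x))).
Proof.
case: hpm => hstar hneg; case: n hn hxy => // n _ [I [J [pI [pJ hIJ]]]] chain_eq.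
have n3 := regular_no_prime_3chain hstar hneg hreg.
have [p [q [pp min_p pq hpq]]] : exists p q, [/\ prime_ideal p, minimal_prime p,
    prime_ideal q & zeta_dist_eq neg n.+1 p q].
  case: (minimal_or_zeta_minimal hneg n3 pI) => min_I; first by exists I, J.
  exists (zeta neg I), (zeta neg J).
  by split; [exact: zeta_prime | | exact: zeta_prime | exact: zeta_dist_eq_zeta].
have [a [np_a p_a]] := exists_pstar_chain_jump hstar hneg n3 pp min_p pq hpq.
by apply: np_a; move: p_a; rewrite /pstar_chain /pstar -chain_eq.
Qed.
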